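(* In the setting described in the context, if a linear operator $T:\mathcal{H}\to\mathcal{H}$ is compact and $\psi_z\to0$ weakly in $H_2$ as $z\to\infty$, then $T$ is weakly compact.
   Context: Setting: $H_1,H_2$ are separable Hilbert spaces, $G$ is a separable locally compact group with left Haar measure $dz$. $\{E_N\}_{N\in\mathbb{N}}$ is a fixed sequence of open precompact subsets of $G$ with $E_N\subseteq E_{N+1}$, $E_N^{-1}=E_N$, $E_NE_N\subseteq E_{2N}$, $\bigcup_NE_N=G$. $\{\psi_z\}_{z\in G}\subseteq H_2$ is a bounded, norm-continuous family forming a continuous Parseval frame: $\langle f,g\rangle_{H_2}=\int_G\langle f,\psi_z\rangle\langle\psi_z,g\rangle\,dz$. $\mathcal{H}=H_1\widehat\otimes H_2$ is the Hilbert space tensor product. For $f\in\mathcal{H}$, $g\in H_2$, $\langle f,g\rangle_{H_2}\in H_1$ is the continuous extension of $\sum c_na_n\otimes b_n\mapsto\sum c_na_n\langle b_n,g\rangle_{H_2}$. For linear $T$ on $\mathcal{H}$ and $z,w\in G$, $T_{(z,w)}h:=\langle T(h\otimes\psi_z),\psi_w\rangle_{H_2}$ for $h\in H_1$. $T$ is weakly compact if each $T_{(z,w)}$ is compact on $H_1$ and for every $M>0$, $\lim_{z\to\infty}\sup_{w\in zE_M}\|T_{(z,w)}\|_{H_1\to H_1}=0$; here $z\to\infty$ means $z$ eventually leaves every compact subset of $G$. *)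

From HB Require Import structures.
From mathcomp Require Import all_boot all_order all_algebra.
From mathcomp Require Import all_classical all_reals all_analysis.
From mathcomp Require Import complex.
Set Implicit Arguments.
Unset Strict Implicit.
Unset Printing Implicit Defensive.
Import Order.TTheory GRing.Theory Num.Theory.
Local Open Scope ring_scope.
Local Open Scope classical_set_scope.

Section Hilbert.
Variable C : numClosedFieldType.

Definition is_inner_product (V : lmodType C) (ip : V -> V -> C) : Prop :=
  [/\ (forall (a : C) (x y z : V), ip (a *: x + y) z = a * ip x z + ip y z),
      (forall x y : V, ip y x = (ip x y)^*),
      (forall x : V, 0 <= ip x x) &
      (forall x : V, ip x x = 0 -> x = 0)].

Definition ipnorm (V : lmodType C) (ip : V -> V -> C) (x : V) : C :=
  sqrtC (ip x x).

Definition ip_cvg (V : lmodType C) (ip : V -> V -> C) (u : nat -> V) (l : V) :=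
  forall eps : C, 0 < eps ->
    exists N : nat, forall n, (N <= n)%N -> ipnorm ip (u n - l) < eps.

Definition ip_cauchy (V : lmodType C) (ip : V -> V -> C) (u : nat -> V) :=
  forall eps : C, 0 < eps ->
    exists N : nat, forall m n, (N <= m)%N -> (N <= n)%N ->
      ipnorm ip (u m - u n) < eps.

Definition is_sep_hilbert (V : lmodType C) (ip : V -> V -> C) : Prop :=
  [/\ is_inner_product ip,
      (forall u : nat -> V, ip_cauchy ip u -> exists l, ip_cvg ip u l) &
      (exists d : nat -> V, forall (x : V) (eps : C), 0 < eps ->
          exists n, ipnorm ip (x - d n) < eps)].

Definition is_linear_map (V W : lmodType C) (T : V -> W) : Prop :=
  forall (a : C) (x y : V), T (a *: x + y) = a *: T x + T y.

Definition compact_op (V W : lmodType C) (ipV : V -> V -> C) (ipW : W -> W -> C)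
    (T : V -> W) : Prop :=
  is_linear_map T /\
  forall u : nat -> V, (exists B : C, forall n, ipnorm ipV (u n) <= B) ->
    exists phi : nat -> nat, (forall n, (phi n < phi n.+1)%N) /\
      exists l : W, ip_cvg ipW (fun n => T (u (phi n))) l.

Definition opnorm_le (V W : lmodType C) (ipV : V -> V -> C) (ipW : W -> W -> C)
    (T : V -> W) (c : C) : Prop :=
  forall h : V, ipnorm ipW (T h) <= c * ipnorm ipV h.

(* H = H1 (hat-tensor) H2 : tens is bilinear, <a(x)b, c(x)d> = <a,c><b,d>, and
   the algebraic tensors sum_n c_n a_n (x) b_n are dense in H. *)
Definition is_hilbert_tensor (H1 H2 H : lmodType C)
    (ip1 : H1 -> H1 -> C) (ip2 : H2 -> H2 -> C) (ip : H -> H -> C)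
    (tens : H1 -> H2 -> H) : Prop :=
  [/\ (forall (c : C) (a a' : H1) (b : H2),
          tens (c *: a + a') b = c *: tens a b + tens a' b),
      (forall (c : C) (a : H1) (b b' : H2),
          tens a (c *: b + b') = c *: tens a b + tens a b'),
      (forall (a c : H1) (b d : H2), ip (tens a b) (tens c d) = ip1 a c * ip2 b d) &
      (forall (f : H) (eps : C), 0 < eps ->
          exists s : seq (C * H1 * H2),
            ipnorm ip (f - \sum_(t <- s) t.1.1 *: tens t.1.2 t.2) < eps)].

(* <f, g>_{H2} in H1 : the continuous extension (in f) of
   sum_n c_n a_n (x) b_n |-> sum_n c_n a_n <b_n, g>_{H2} *)
Definition is_partial_ip (H1 H2 H : lmodType C)
    (ip1 : H1 -> H1 -> C) (ip2 : H2 -> H2 -> C) (ip : H -> H -> C)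
    (tens : H1 -> H2 -> H) (pip : H -> H2 -> H1) : Prop :=
  forall g : H2,
    (forall s : seq (C * H1 * H2),
        pip (\sum_(t <- s) t.1.1 *: tens t.1.2 t.2) g
        = \sum_(t <- s) (t.1.1 * ip2 t.2 g) *: t.1.2) /\
    (forall (f : H) (eps : C), 0 < eps -> exists2 delta : C, 0 < delta &
        forall f' : H, ipnorm ip (f' - f) < delta ->
          ipnorm ip1 (pip f' g - pip f g) < eps).

End Hilbert.

Section Groups.
Variable G : ptopologicalType.

Definition is_sep_lc_group (mul : G -> G -> G) (inv : G -> G) (e : G) : Prop :=
  [/\ [/\ (forall x y z, mul x (mul y z) = mul (mul x y) z),
          (forall x, mul e x = x) /\ (forall x, mul x e = x) &
          (forall x, mul (inv x) x = e) /\ (forall x, mul x (inv x) = e)],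
      continuous (fun p : G * G => mul p.1 p.2) /\ continuous inv,
      hausdorff_space G,
      (forall x : G, exists2 K : set G, compact K & nbhs x K) &
      (exists D : set G, countable D /\ closure D = setT)].

Definition borelG := g_sigma_algebraType (@open G).

Definition is_left_haar (R : realType) (mul : G -> G -> G)
    (mu : {measure set borelG -> \bar R}) : Prop :=
  [/\ (0 < mu setT)%E,
      (forall (x : G) (A : set borelG), measurable A ->
          mu (mul x @` A) = mu A),
      (forall K : set G, compact K -> (mu K < +oo)%E),
      (forall A : set borelG, measurable A ->
          mu A = ereal_inf [set mu U | U in [set U : set G | open U /\ A `<=` U]]) &
      (forall U : set G, open U ->
          mu U = ereal_sup [set mu K | K in [set K : set G | compact K /\ K `<=` U]])].

Definition is_exhaustion (mul : G -> G -> G) (inv : G -> G) (E : nat -> set G) : Prop :=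
  [/\ (forall N, open (E N) /\ compact (closure (E N))),
      (forall N, E N `<=` E N.+1),
      (forall N, inv @` E N = E N),
      (forall N, [set mul a b | a in E N & b in E N] `<=` E (2 * N)%N) &
      \bigcup_N E N = setT].

Definition tends_to_zero_at_infty (R : realType) (F : G -> R[i]) : Prop :=
  forall eps : R[i], 0 < eps ->
    exists2 K : set G, compact K & forall z, ~ K z -> `|F z| < eps.

End Groups.

(* bounded, norm-continuous continuous Parseval frame {psi_z} in H2:
   <f,g> = int_G <f,psi_z><psi_z,g> dz   (complex integral = integrals of the
   real and imaginary parts) *)
Definition is_cont_parseval_frame (R : realType) (G : ptopologicalType)
    (mu : {measure set borelG G -> \bar R})
    (H2 : lmodType R[i]) (ip2 : H2 -> H2 -> R[i]) (psi : G -> H2) : Prop :=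
  [/\ (exists B : R[i], forall z, ipnorm ip2 (psi z) <= B),
      (forall (z : G) (eps : R[i]), 0 < eps ->
          nbhs z [set z' | ipnorm ip2 (psi z' - psi z) < eps]) &
      (forall f g : H2,
        let F := fun z : borelG G => ip2 f (psi z) * ip2 (psi z) g in
        [/\ mu.-integrable setT (fun z => (complex.Re (F z))%:E),
            mu.-integrable setT (fun z => (complex.Im (F z))%:E),
            (complex.Re (ip2 f g))%:E = (\int[mu]_z (complex.Re (F z))%:E)%E &
            (complex.Im (ip2 f g))%:E = (\int[mu]_z (complex.Im (F z))%:E)%E])].

Definition Tzw (C : numClosedFieldType) (G : Type) (H1 H2 H : lmodType C)
    (tens : H1 -> H2 -> H) (pip : H -> H2 -> H1) (psi : G -> H2)
    (T : H -> H) (z w : G) : H1 -> H1 :=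
  fun h => pip (T (tens h (psi z))) (psi w).

Definition weakly_compact (R : realType) (G : ptopologicalType)
    (mul : G -> G -> G) (E : nat -> set G)
    (H1 H2 H : lmodType R[i]) (ip1 : H1 -> H1 -> R[i])
    (tens : H1 -> H2 -> H) (pip : H -> H2 -> H1) (psi : G -> H2)
    (T : H -> H) : Prop :=
  (forall z w : G, compact_op ip1 ip1 (Tzw tens pip psi T z w)) /\
  (forall M : nat, (0 < M)%N ->
     forall eps : R[i], 0 < eps ->
       exists2 K : set G, compact K &
         forall z : G, ~ K z ->
           forall w : G, (exists2 x, E M x & w = mul z x) ->
             opnorm_le ip1 ip1 (Tzw tens pip psi T z w) eps).

From HB Require Import structures.
From mathcomp Require Import all_boot all_order all_algebra.
From mathcomp Require Import all_classical all_reals all_analysis.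
From mathcomp Require Import complex unstable.
Import Order.TTheory GRing.Theory Num.Theory.
Local Open Scope ring_scope.
Local Open Scope classical_set_scope.
Set Implicit Arguments.
Unset Strict Implicit.

(* T_(z,w) factors as h |-> h (x) psi_z, then T, then f |-> <f, psi_w>; the
   middle factor is compact and the outer ones are bounded, so T_(z,w) is
   compact.  If the uniform decay failed for some M and eps, there would be
   unit vectors h_n and points z_n, w_n = z_n x_n (x_n in E_M) with w_n
   escaping every compact set and ||T_(z_n,w_n) h_n|| > eps.  Compactness of T
   gives a subsequence along which T(h_n (x) psi_(z_n)) converges to some l.
   Since the psi_w are bounded and tend weakly to 0, <l, psi_w> -> 0 as
   w -> oo (first for algebraic tensors, then by density), so
   ||T_(z_n,w_n) h_n|| <= B ||T(h_n (x) psi_(z_n)) - l|| + ||<l, psi_(w_n)>||,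
   with B a bound on the ||psi_w||, tends to 0 along the subsequence, a
   contradiction. *)

Section InnerProduct.
Variables (C : numClosedFieldType) (V : lmodType C) (ip : V -> V -> C).
Hypothesis hip : is_inner_product ip.

Lemma ipPl a x y z : ip (a *: x + y) z = a * ip x z + ip y z.
Proof. by case: hip. Qed.

Lemma ipC x y : ip y x = (ip x y)^*.
Proof. by case: hip. Qed.

Lemma ip_ge0 x : 0 <= ip x x.
Proof. by case: hip. Qed.

Lemma ip_eq0 x : ip x x = 0 -> x = 0.
Proof. by case: hip => _ _ _; apply. Qed.

Lemma ipDl x y z : ip (x + y) z = ip x z + ip y z.
Proof. by have := ipPl 1 x y z; rewrite scale1r mul1r. Qed.

Lemma ip0l z : ip 0 z = 0.
Proof. by apply: (addrI (ip 0 z)); rewrite -ipDl !addr0. Qed.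

Lemma ipZl a x z : ip (a *: x) z = a * ip x z.
Proof. by rewrite -[a *: x]addr0 ipPl ip0l addr0. Qed.

Lemma ipBl x y z : ip (x - y) z = ip x z - ip y z.
Proof. by rewrite ipDl -scaleN1r ipZl mulN1r. Qed.

Lemma ipDr x y z : ip z (x + y) = ip z x + ip z y.
Proof. by rewrite ipC ipDl rmorphD [ip z x]ipC [ip z y]ipC. Qed.

Lemma ipZr a x z : ip z (a *: x) = a^* * ip z x.
Proof. by rewrite ipC ipZl rmorphM [ip z x]ipC. Qed.

Lemma ip0r z : ip z 0 = 0.
Proof. by rewrite ipC ip0l rmorph0. Qed.

Lemma ip_suml I (s : seq I) (F : I -> V) z :
  ip (\sum_(t <- s) F t) z = \sum_(t <- s) ip (F t) z.
Proof.
elim: s => [|t s IH]; first by rewrite !big_nil ip0l.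
by rewrite !big_cons ipDl IH.
Qed.

Lemma cauchy_schwarz_sqr u v : `|ip u v| ^+ 2 <= ip u u * ip v v.
Proof.
have [/ip_eq0 ->|vv_neq0] := eqVneq (ip v v) 0.
  by rewrite !ip0r normr0 expr0n /= mulr0.
pose a := ip u v / ip v v.
have pythagoras w : ip w v = 0 ->
    ip (w + a *: v) (w + a *: v) = ip w w + `|a| ^+ 2 * ip v v.
  move=> wv0; have vw0 : ip v w = 0 by rewrite ipC wv0 rmorph0.
  rewrite ipDl !ipDr !ipZl !ipZr wv0 vw0 !mulr0 addr0 add0r.
  by rewrite normCK mulrA [a * _]mulrC.
have wv0 : ip (u - a *: v) v = 0 by rewrite ipBl ipZl /a divfK ?subrr.
have := pythagoras _ wv0; rewrite subrK => ->.
have vv_gt0 : 0 < ip v v by rewrite lt_def vv_neq0 ip_ge0.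
rewrite mulrDl -[X in X <= _]add0r lerD ?mulr_ge0 ?ip_ge0 //.
rewrite /a normrM normfV (ger0_norm (ip_ge0 v)) exprMn exprVn.
by rewrite -mulrA -expr2 divfK ?expf_neq0.
Qed.

Lemma ipnorm_ge0 x : 0 <= ipnorm ip x.
Proof. by rewrite sqrtC_ge0 ip_ge0. Qed.

Lemma ipnorm_sqr x : ipnorm ip x ^+ 2 = ip x x.
Proof. exact: sqrtCK. Qed.

Lemma ipnorm0 : ipnorm ip 0 = 0.
Proof. by rewrite /ipnorm ip0l sqrtC0. Qed.

Lemma ipnorm_eq0 x : ipnorm ip x = 0 -> x = 0.
Proof. by move=> /eqP; rewrite sqrtC_eq0 => /eqP /ip_eq0. Qed.

Lemma cauchy_schwarz u v : `|ip u v| <= ipnorm ip u * ipnorm ip v.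
Proof.
rewrite -(sqrCK (normr_ge0 _)) -sqrtCM ?nnegrE ?ip_ge0 //.
by rewrite ler_sqrtC ?nnegrE ?exprn_ge0 ?mulr_ge0 ?ip_ge0 ?cauchy_schwarz_sqr.
Qed.

Lemma ipnormZ a x : ipnorm ip (a *: x) = `|a| * ipnorm ip x.
Proof.
rewrite /ipnorm ipZl ipZr mulrA -normCK sqrtCM ?nnegrE ?exprn_ge0 ?ip_ge0 //.
by rewrite sqrCK.
Qed.

Lemma ipnorm_distC x y : ipnorm ip (x - y) = ipnorm ip (y - x).
Proof.
by have := ipnormZ (-1) (y - x); rewrite scaleN1r opprB normrN normr1 mul1r.
Qed.

Lemma ler_ipnormD x y : ipnorm ip (x + y) <= ipnorm ip x + ipnorm ip y.
Proof.
rewrite -(@ler_pXn2r _ 2) ?nnegrE ?addr_ge0 ?ipnorm_ge0 //.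
rewrite ipnorm_sqr sqrrD !ipnorm_sqr ipDl !ipDr [ip y x]ipC.
have -> : ip x x + ip x y + ((ip x y)^* + ip y y)
    = ip x x + 'Re (ip x y) *+ 2 + ip y y.
  by rewrite ReE -mulr_natr divfK ?pnatr_eq0 // !addrA.
rewrite lerD2r lerD2l lerMn2r /=.
exact: le_trans (leif_Re_Creal _).1 (cauchy_schwarz x y).
Qed.

Lemma ler_ipnorm_sum I (s : seq I) (F : I -> V) :
  ipnorm ip (\sum_(t <- s) F t) <= \sum_(t <- s) ipnorm ip (F t).
Proof.
elim: s => [|t s IH]; first by rewrite !big_nil ipnorm0.
by rewrite !big_cons (le_trans (ler_ipnormD _ _)) ?lerD2l.
Qed.

End InnerProduct.

Section LinearMap.
Variables (C : numClosedFieldType) (U V W : lmodType C).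

Lemma linear_map0 (T : V -> W) : is_linear_map T -> T 0 = 0.
Proof.
move=> lT; have := lT 1 0 0; rewrite !scale1r !addr0 => T0.
by apply: (addrI (T 0)); rewrite -T0 addr0.
Qed.

Lemma linear_mapZ (T : V -> W) a x : is_linear_map T -> T (a *: x) = a *: T x.
Proof. by move=> lT; rewrite -[a *: x]addr0 lT linear_map0 ?addr0. Qed.

Lemma linear_mapB (T : V -> W) x y : is_linear_map T -> T (x - y) = T x - T y.
Proof. by move=> lT; rewrite addrC -scaleN1r lT scaleN1r addrC. Qed.

Lemma linear_map_comp (S : U -> V) (T : V -> W) :
  is_linear_map S -> is_linear_map T -> is_linear_map (T \o S).
Proof. by move=> lS lT a x y /=; rewrite lS lT. Qed.

End LinearMap.

Lemma not_opnorm_le_unit (C : numClosedFieldType) (V W : lmodType C)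
    (ipV : V -> V -> C) (ipW : W -> W -> C) (T : V -> W) (c : C) :
  is_inner_product ipV -> is_inner_product ipW -> is_linear_map T -> 0 <= c ->
  ~ opnorm_le ipV ipW T c ->
  exists h, ipnorm ipV h = 1 /\ c < ipnorm ipW (T h).
Proof.
move=> hV hW lT c_ge0 /existsNP [h /negP].
rewrite -real_ltNge ?realE ?mulr_ge0 ?(ipnorm_ge0 hV) ?(ipnorm_ge0 hW) //.
move=> Th_gt.
have h_gt0 : 0 < ipnorm ipV h.
  rewrite lt_def (ipnorm_ge0 hV) andbT; apply: contraTneq Th_gt => h0.
  by rewrite h0 mulr0 (ipnorm_eq0 hV h0) linear_map0 // (ipnorm0 hW) ltxx.
exists ((ipnorm ipV h)^-1 *: h).
rewrite linear_mapZ // (ipnormZ hV) (ipnormZ hW).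
rewrite ger0_norm ?invr_ge0 ?(ipnorm_ge0 hV) // mulVf ?gt_eqF //.
by rewrite mulrC ltr_pdivlMr.
Qed.

Lemma common_pos_lower_bound (C : numDomainType) (x y : C) :
  0 < x -> 0 < y -> exists2 z, 0 < z & z <= x /\ z <= y.
Proof.
move=> x_gt0 y_gt0; case: (real_leP (gtr0_real x_gt0) (gtr0_real y_gt0)).
  by exists x.
by move=> /ltW; exists y.
Qed.

Section Tensor.
Variables (C : numClosedFieldType) (H1 H2 H : lmodType C).
Variables (ip1 : H1 -> H1 -> C) (ip2 : H2 -> H2 -> C) (ip : H -> H -> C).
Variables (tens : H1 -> H2 -> H) (pip : H -> H2 -> H1).
Hypotheses (h1 : is_inner_product ip1) (h2 : is_inner_product ip2).
Hypotheses (h : is_inner_product ip) (ht : is_hilbert_tensor ip1 ip2 ip tens).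
Hypothesis hp : is_partial_ip ip1 ip2 ip tens pip.

Lemma tens_linearl b : is_linear_map (tens^~ b).
Proof. by case: ht => tens_lin _ _ _ c a a'; apply: tens_lin. Qed.

Lemma tens_ip a b c d : ip (tens a b) (tens c d) = ip1 a c * ip2 b d.
Proof. by case: ht. Qed.

Lemma tens_dense f eps : 0 < eps -> exists s : seq (C * H1 * H2),
  ipnorm ip (f - \sum_(t <- s) t.1.1 *: tens t.1.2 t.2) < eps.
Proof. by case: ht => _ _ _; apply. Qed.

Lemma ipnorm_tens a b : ipnorm ip (tens a b) = ipnorm ip1 a * ipnorm ip2 b.
Proof. by rewrite /ipnorm tens_ip sqrtCM // nnegrE ip_ge0. Qed.

Lemma pip_sum (s : seq (C * H1 * H2)) g :
  pip (\sum_(t <- s) t.1.1 *: tens t.1.2 t.2) g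
  = \sum_(t <- s) (t.1.1 * ip2 t.2 g) *: t.1.2.
Proof. by case: (hp g). Qed.

Lemma pip_continuous g f eps : 0 < eps -> exists2 delta, 0 < delta &
  forall f', ipnorm ip (f' - f) < delta -> ipnorm ip1 (pip f' g - pip f g) < eps.
Proof. exact: (hp g).2. Qed.

(* Both sides are continuous in f and agree on the dense algebraic tensors. *)
Lemma pip_adjoint f g a : ip1 (pip f g) a = ip f (tens a g).
Proof.
apply/eqP; rewrite -subr_eq0 -normr_le0; apply/ler_addgt0Pr => eps eps_gt0.
pose K := ipnorm ip1 a + ipnorm ip (tens a g) + 1.
have K_gt0 : 0 < K by rewrite ltr_wpDl ?addr_ge0 ?ipnorm_ge0.
pose e := eps / K; have e_gt0 : 0 < e by rewrite divr_gt0.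
have [delta delta_gt0 pip_near] := pip_continuous g f e_gt0.
have [eta eta_gt0 [eta_delta eta_e]] := common_pos_lower_bound delta_gt0 e_gt0.
have [s fF] := tens_dense f eta_gt0; set F := \sum_(t <- s) _ in fF.
rewrite (ipnorm_distC h) in fF.
have adjF : ip1 (pip F g) a = ip F (tens a g).
  rewrite pip_sum (ip_suml h1) (ip_suml h); apply: eq_bigr => t _.
  by rewrite (ipZl h1) (ipZl h) tens_ip mulrA mulrAC.
have -> : ip1 (pip f g) a - ip f (tens a g)
    = ip1 (pip f g - pip F g) a + ip (F - f) (tens a g).
  by rewrite (ipBl h1) (ipBl h) adjF addrA subrK.
have -> : eps = e * K by rewrite /e divfK ?gt_eqF.
rewrite /K !mulrDr mulr1 add0r (le_trans (ler_normD _ _)) //.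
apply: ler_wpDr; first exact: ltW.
apply: lerD.
  apply: le_trans (cauchy_schwarz h1 _ _) _; apply: ler_wpM2r; first exact: ipnorm_ge0.
  by rewrite ltW // (ipnorm_distC h1) pip_near // (lt_le_trans fF).
apply: le_trans (cauchy_schwarz h _ _) _; apply: ler_wpM2r; first exact: ipnorm_ge0.
exact: ltW (lt_le_trans fF eta_e).
Qed.

Lemma pip_linear g : is_linear_map (pip^~ g).
Proof.
move=> c f f'; apply/eqP; rewrite -subr_eq0; apply/eqP/(ip_eq0 h1).
set d := _ - _.
by rewrite {1}/d (ipBl h1) (ipPl h1) !pip_adjoint (ipPl h) subrr.
Qed.

Lemma ler_ipnorm_pip f g : ipnorm ip1 (pip f g) <= ipnorm ip f * ipnorm ip2 g.
Proof.
set p := pip f g.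
have [->|p_neq0] := eqVneq (ipnorm ip1 p) 0; first by rewrite mulr_ge0 ?ipnorm_ge0.
have p_gt0 : 0 < ipnorm ip1 p by rewrite lt_def p_neq0 ipnorm_ge0.
rewrite -(ler_pM2l p_gt0) -expr2 (ipnorm_sqr ip1) -(ger0_norm (ip_ge0 h1 p)).
by rewrite pip_adjoint (le_trans (cauchy_schwarz h _ _)) // ipnorm_tens mulrCA.
Qed.

Variables (G : Type) (psi : G -> H2) (T : H -> H).

Lemma Tzw_linear z w :
  is_linear_map T -> is_linear_map (Tzw tens pip psi T z w).
Proof.
move=> lT; apply: linear_map_comp (pip_linear _).
exact: linear_map_comp (tens_linearl _) lT.
Qed.

Lemma Tzw_compact z w :
  compact_op ip ip T -> compact_op ip1 ip1 (Tzw tens pip psi T z w).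
Proof.
case=> lT T_compact; split; first exact: Tzw_linear.
move=> u [b u_le].
have [|phi [phi_incr [l Tu_cvg]]] := T_compact (fun n => tens (u n) (psi z)).
  exists (b * ipnorm ip2 (psi z)) => n.
  by rewrite ipnorm_tens ler_wpM2r ?ipnorm_ge0.
exists phi; split => //; exists (pip l (psi w)) => eps eps_gt0.
have [delta delta_gt0 pip_near] := pip_continuous (psi w) l eps_gt0.
have [N Tu_near] := Tu_cvg delta delta_gt0.
by exists N => n le_Nn; apply/pip_near/Tu_near.
Qed.

End Tensor.

Section VanishingAtInfinity.
Variables (R : realType) (G : ptopologicalType).
Implicit Types (F : G -> R[i]) (w : nat -> G).

Lemma tends_to_zero_at_infty_le F F' : (forall z, `|F z| <= `|F' z|) ->
  tends_to_zero_at_infty F' -> tends_to_zero_at_infty F.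
Proof.
move=> le_FF' F'0 eps /F'0 [K cK F'K]; exists K => // z /F'K.
exact: le_lt_trans.
Qed.

Lemma tends_to_zero_at_infty_approx F :
  (forall delta, 0 < delta -> exists2 F', tends_to_zero_at_infty F' &
     forall z, `|F z| <= delta + `|F' z|) ->
  tends_to_zero_at_infty F.
Proof.
move=> F_approx eps eps_gt0; have eps2_gt0 : 0 < eps / 2 by rewrite divr_gt0.
have [F' F'0 le_FF'] := F_approx _ eps2_gt0.
have [K cK F'K] := F'0 _ eps2_gt0; exists K => // z Kz.
by rewrite (le_lt_trans (le_FF' z)) // [ltRHS]splitr ltrD2l F'K.
Qed.

Lemma tends_to_zero_at_inftyD F F' : tends_to_zero_at_infty F ->
  tends_to_zero_at_infty F' -> tends_to_zero_at_infty (fun z => F z + F' z).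
Proof.
move=> F0 F'0 eps eps_gt0; have eps2_gt0 : 0 < eps / 2 by rewrite divr_gt0.
have [K cK FK] := F0 _ eps2_gt0; have [K' cK' F'K'] := F'0 _ eps2_gt0.
exists (K `|` K') => [|z /not_orP[Kz K'z]]; first exact: compactU.
by rewrite (le_lt_trans (ler_normD _ _)) // [ltRHS]splitr ltrD ?FK ?F'K'.
Qed.

Lemma tends_to_zero_at_inftyMl c F :
  tends_to_zero_at_infty F -> tends_to_zero_at_infty (fun z => c * F z).
Proof.
move=> F0 eps eps_gt0; have c1_gt0 : 0 < `|c| + 1 by rewrite ltr_wpDl.
have [K cK FK] := F0 (eps / (`|c| + 1)) (divr_gt0 eps_gt0 c1_gt0).
exists K => // z /FK Fz; rewrite normrM.
apply: le_lt_trans (_ : _ <= (`|c| + 1) * `|F z|) _.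
  by rewrite ler_wpM2r ?lerDl.
by rewrite mulrC -ltr_pdivlMr.
Qed.

Lemma tends_to_zero_at_infty_sum I (s : seq I) (F : I -> G -> R[i]) :
  (forall i, tends_to_zero_at_infty (F i)) ->
  tends_to_zero_at_infty (fun z => \sum_(i <- s) F i z).
Proof.
move=> F0; elim: s => [|i s IH].
  move=> eps eps_gt0; exists set0 => [|z _]; first exact: compact0.
  by rewrite big_nil normr0.
under eq_fun do rewrite big_cons; exact: tends_to_zero_at_inftyD.
Qed.

Definition escapes_compacts w :=
  forall K, compact K -> exists N, forall n, (N <= n)%N -> ~ K (w n).

Lemma tends_to_zero_at_infty_escapes F w :
  tends_to_zero_at_infty F -> escapes_compacts w ->
  forall eps, 0 < eps -> exists N, forall n, (N <= n)%N -> `|F (w n)| < eps.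
Proof.
move=> F0 w_esc eps /F0 [K /w_esc [N wK] FK].
by exists N => n /wK; apply: FK.
Qed.

Lemma escapes_compacts_subseq w phi : (forall n, (phi n < phi n.+1)%N) ->
  escapes_compacts w -> escapes_compacts (w \o phi).
Proof.
move=> phi_incr w_esc K /w_esc [N wK]; exists N => n le_Nn; apply: wK.
have phi_mono : {mono phi : m n / (m <= n)%N} by apply/increasing_seqP.
exact: leq_trans le_Nn (mono_leq_infl phi_mono n).
Qed.

Section Exhaustion.
Variables (mul : G -> G -> G) (inv : G -> G) (E : nat -> set G).
Hypothesis hE : is_exhaustion mul inv E.

Lemma exhaustion_homo : {homo E : m n / (m <= n)%N >-> m `<=` n}.
Proof.
have [_ E_incr _ _ _] := hE.
apply: homo_leq E_incr; [exact: subset_refl | move=> B A C; exact: subset_trans].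
Qed.

Lemma exhaustion_compact K : compact K -> exists N, K `<=` E N.
Proof.
case: hE => E_open _ _ _ E_cover; rewrite compact_cover => cK.
have [|D _ KD] := cK nat setT E (fun N _ => (E_open N).1).
  by move=> z _; rewrite /cover E_cover.
exists (\max_(i <- finmap.enum_fset D) i)%N => z /KD [N DN ENz].
by apply: exhaustion_homo ENz; exact: (@leq_bigmax_seq _ _ xpredT id N).
Qed.

Lemma exhaustion_escapes w : (forall n, ~ E n (w n)) -> escapes_compacts w.
Proof.
move=> wE K /exhaustion_compact [N KE]; exists N => n le_Nn /KE.
by move=> /(exhaustion_homo le_Nn); apply: wE.
Qed.

Lemma exhaustion_mulr_escape (e : G) M N x z :
  associative mul -> right_id e mul -> (forall y, mul y (inv y) = e) ->
  E M x -> ~ closure (E (2 * (N + M))) z -> ~ E N (mul z x).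
Proof.
move=> mulA mulx1 mulxV Ex zE Ezx; apply/zE/subset_closure.
have [_ _ E_inv E_mul _] := hE.
have -> : z = mul (mul z x) (inv x) by rewrite -mulA mulxV mulx1.
apply: E_mul; exists (mul z x); first exact: (exhaustion_homo (leq_addr M N)).
exists (inv x) => //; apply: (exhaustion_homo (leq_addl N M)).
by rewrite -E_inv; exists x.
Qed.

Lemma uniform_decay_failure (e : G) (C : numClosedFieldType) (V : lmodType C)
    (ipV : V -> V -> C) (S : G -> G -> V -> V) M (eps : C) :
  associative mul -> right_id e mul -> (forall y, mul y (inv y) = e) ->
  is_inner_product ipV -> 0 <= eps ->
  ~ (exists2 K : set G, compact K & forall z, ~ K z ->
       forall w : G, (exists2 x, E M x & w = mul z x) ->
       opnorm_le ipV ipV (S z w) eps) ->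
  (forall z w : G, is_linear_map (S z w)) ->
  forall N, exists p : G * G * V,
    [/\ ~ E N p.1.2, ipnorm ipV p.2 = 1 & eps < ipnorm ipV (S p.1.1 p.1.2 p.2)].
Proof.
move=> mulA mulx1 mulxV hV eps_ge0 no_bound S_linear N.
apply: contrapT => no_bad; apply: no_bound.
exists (closure (E (2 * (N + M))%N)); first by have [/(_ (2 * (N + M))%N) []] := hE.
move=> z zE _ [x Ex ->]; apply: contrapT => unbounded.
have [u [u_unit Su_gt]] := not_opnorm_le_unit hV hV (S_linear _ _) eps_ge0 unbounded.
apply: no_bad; exists (z, mul z x, u); split=> //.
exact: exhaustion_mulr_escape mulA mulx1 mulxV Ex zE.
Qed.

End Exhaustion.

End VanishingAtInfinity.

Section FrameDecay.
Variables (R : realType) (H1 H2 H : lmodType R[i]).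
Variables (ip1 : H1 -> H1 -> R[i]) (ip2 : H2 -> H2 -> R[i]) (ip : H -> H -> R[i]).
Variables (tens : H1 -> H2 -> H) (pip : H -> H2 -> H1).
Hypotheses (h1 : is_inner_product ip1) (h2 : is_inner_product ip2).
Hypotheses (h : is_inner_product ip) (ht : is_hilbert_tensor ip1 ip2 ip tens).
Hypothesis hp : is_partial_ip ip1 ip2 ip tens pip.
Variables (G : ptopologicalType) (psi : G -> H2) (B : R[i]).
Hypotheses (B_gt0 : 0 < B) (psi_le : forall z, ipnorm ip2 (psi z) <= B).
Hypothesis psi_weak0 : forall g, tends_to_zero_at_infty (fun z => ip2 (psi z) g).

Lemma ler_ipnorm_pip_psi f f' w : ipnorm ip1 (pip f (psi w))
  <= ipnorm ip (f - f') * B + ipnorm ip1 (pip f' (psi w)).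
Proof.
have -> : pip f (psi w) = pip (f - f') (psi w) + pip f' (psi w).
  by rewrite (linear_mapB _ _ (pip_linear h1 h ht hp _)) subrK.
rewrite (le_trans (ler_ipnormD h1 _ _)) // lerD2r.
rewrite (le_trans (ler_ipnorm_pip h1 h2 h ht hp _ _)) //.
by rewrite ler_wpM2l ?ipnorm_ge0.
Qed.

Lemma pip_psi_tensor_sum_vanishing (s : seq (R[i] * H1 * H2)) :
  tends_to_zero_at_infty
    (fun w => ipnorm ip1 (pip (\sum_(t <- s) t.1.1 *: tens t.1.2 t.2) (psi w))).
Proof.
pose F (t : R[i] * H1 * H2) (w : G) :=
  `|t.1.1| * ipnorm ip1 t.1.2 * `|ip2 (psi w) t.2|.
have F_ge0 t w : 0 <= F t w by rewrite !mulr_ge0 ?ipnorm_ge0.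
apply: (@tends_to_zero_at_infty_le _ _ _ (fun w => \sum_(t <- s) F t w)) => [w|].
  rewrite !ger0_norm ?sumr_ge0 ?ipnorm_ge0 // (pip_sum hp).
  apply: le_trans (ler_ipnorm_sum h1 _ _) _; apply: ler_sum => t _.
  by rewrite (ipnormZ h1) normrM (ipC h2) norm_conjC mulrAC.
apply: tends_to_zero_at_infty_sum => t; apply: tends_to_zero_at_inftyMl.
by apply: tends_to_zero_at_infty_le (psi_weak0 t.2) => w; rewrite normr_id.
Qed.

Lemma pip_psi_vanishing f :
  tends_to_zero_at_infty (fun w => ipnorm ip1 (pip f (psi w))).
Proof.
apply: tends_to_zero_at_infty_approx => delta delta_gt0.
have [s fF] := tens_dense ht f (divr_gt0 delta_gt0 B_gt0).
set F := \sum_(t <- s) _ in fF.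
exists (fun w => ipnorm ip1 (pip F (psi w))) => [|w].
  exact: pip_psi_tensor_sum_vanishing.
rewrite !ger0_norm ?ipnorm_ge0 // (le_trans (ler_ipnorm_pip_psi _ F w)) //.
by rewrite lerD2r ltW // -ltr_pdivlMr.
Qed.

Variable T : H -> H.
Hypothesis hT : compact_op ip ip T.

Lemma Tzw_escapes_lt (z w : nat -> G) (u : nat -> H1) eps : 0 < eps ->
  escapes_compacts w -> (forall n, ipnorm ip1 (u n) = 1) ->
  exists n, ipnorm ip1 (Tzw tens pip psi T (z n) (w n) (u n)) < eps.
Proof.
move=> eps_gt0 w_esc u_unit.
have [|phi [phi_incr [l Tx_cvg]]] := hT.2 (fun n => tens (u n) (psi (z n))).
  by exists B => n; rewrite (ipnorm_tens h1 h2 ht) u_unit mul1r.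
have eps2_gt0 : 0 < eps / 2 by rewrite divr_gt0.
have [N1 pip_l_small] := tends_to_zero_at_infty_escapes (pip_psi_vanishing l)
  (escapes_compacts_subseq phi_incr w_esc) eps2_gt0.
have [N2 Tx_near] := Tx_cvg _ (divr_gt0 eps2_gt0 B_gt0).
exists (phi (maxn N1 N2)); rewrite /Tzw.
rewrite (le_lt_trans (ler_ipnorm_pip_psi _ l _)) // [ltRHS]splitr ltrD //.
  by rewrite -ltr_pdivlMr // Tx_near // leq_maxr.
by have := pip_l_small _ (leq_maxl N1 N2); rewrite ger0_norm ?ipnorm_ge0.
Qed.

End FrameDecay.

Theorem proposition4p4 (R : realType)
  (H1 : lmodType R[i]) (ip1 : H1 -> H1 -> R[i]) (hH1 : is_sep_hilbert ip1)
  (H2 : lmodType R[i]) (ip2 : H2 -> H2 -> R[i]) (hH2 : is_sep_hilbert ip2)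
  (H : lmodType R[i]) (ip : H -> H -> R[i]) (hH : is_sep_hilbert ip)
  (tens : H1 -> H2 -> H) (htens : is_hilbert_tensor ip1 ip2 ip tens)
  (pip : H -> H2 -> H1) (hpip : is_partial_ip ip1 ip2 ip tens pip)
  (G : ptopologicalType) (mul : G -> G -> G) (inv : G -> G) (e : G)
  (hG : is_sep_lc_group mul inv e)
  (mu : {measure set borelG G -> \bar R}) (hmu : is_left_haar mul mu)
  (E : nat -> set G) (hE : is_exhaustion mul inv E)
  (psi : G -> H2) (hpsi : is_cont_parseval_frame mu ip2 psi)
  (T : H -> H) (hT : compact_op ip ip T)
  (hweak : forall g : H2, tends_to_zero_at_infty (fun z => ip2 (psi z) g)) :
  weakly_compact mul E ip1 tens pip psi T.
Proof.
case: hH1 hH2 hH => [h1 _ _] [h2 _ _] [h _ _].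
have [[mulA [_ mulx1] [_ mulxV]] _ _ _ _] := hG.
have [[B psi_le] _ _] := hpsi.
have B_ge0 : 0 <= B := le_trans (ipnorm_ge0 h2 _) (psi_le e).
have psi_le1 z : ipnorm ip2 (psi z) <= B + 1 by rewrite ler_wpDr.
split=> [z w|M _ eps eps_gt0]; first exact: (Tzw_compact h1 h2 h htens hpip psi z w hT).
apply: contrapT => /(uniform_decay_failure hE mulA mulx1 mulxV h1 (ltW eps_gt0)).
move=> /(_ (fun z w => Tzw_linear h1 h htens hpip psi z w hT.1)) /choice [p p_bad].
have [||n] := Tzw_escapes_lt h1 h2 h htens hpip (ltr_wpDl B_ge0 ltr01) psi_le1 hweak
  hT (fun n => (p n).1.1) (w := fun n => (p n).1.2) (u := fun n => (p n).2) eps_gt0.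
- by apply: (exhaustion_escapes hE) => n; have [] := p_bad n.
- by move=> n; have [] := p_bad n.
- by have [_ _ /lt_trans/[apply]] := p_bad n; rewrite ltxx.
Qed.
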